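(* Consider the open chain with sites $1,\dots,N$ and distance $|i-j|$. Let $R_{\max}$ be a positive integer and, for each subset $X\subseteq\{1,\dots,N\}$ with $\mathrm{diam}(X)\le R_{\max}$, let $h_X$ be an operator supported in $X$ (possibly zero, not necessarily Hermitian) such that $h_X|W\rangle=0$ and $h_X|\overline 0\rangle=0$. If for some $p\in\{0,\dots,N\}$ with $p\le N/R_{\max}$ one has $\left(\sum_{X:\mathrm{diam}(X)\le R_{\max}}h_X\right)|W^p\rangle=E'_p|W^p\rangle$ for some $E'_p\in\mathbb{C}$, then $E'_p=0$.
   Context: System of $N$ qubits on sites $1,\dots,N$ with local basis $|0\rangle,|1\rangle$; $s_i^\dagger$ acts on site $i$ as $s^\dagger|0\rangle=|1\rangle$, $s^\dagger|1\rangle=0$; $|\overline 0\rangle=|0\rangle^{\otimes N}$. For a set $X$ of sites, $\mathrm{diam}(X)=1+\max_{i,j\in X}|i-j|$. An operator is supported in $X$ if it acts as the identity on all sites outside $X$. $S^\dagger=\sum_i s_i^\dagger$; for $p=0,\dots,N$, $|W^p\rangle$ is the normalized equal-weight superposition of all basis states with exactly $p$ sites in state $|1\rangle$ (equivalently the normalization of $(S^\dagger)^p|\overline 0\rangle$), and $|W\rangle=|W^1\rangle$. *)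

From HB Require Import structures.
From mathcomp Require Import all_boot all_order all_algebra.
From mathcomp Require Import complex.
From mathcomp Require Import reals.
Set Implicit Arguments. Unset Strict Implicit. Unset Printing Implicit Defensive.
Import Order.TTheory GRing.Theory Num.Theory.
Local Open Scope ring_scope.
Local Open Scope complex_scope.

(* Computational basis states of N qubits: b : 'I_N -> bool, b i = true <-> site i in |1>. *)
Definition bstate (N : nat) := {ffun 'I_N -> bool}.

(* Vectors are coefficient functions on the basis, operators are matrices
   indexed by basis states (M b b' = <b|M|b'>). *)
Definition vec (R : realType) (N : nat) := bstate N -> R[i].
Definition op (R : realType) (N : nat) := bstate N -> bstate N -> R[i].

Definition apply (R : realType) (N : nat) (M : op R N) (v : vec R N) : vec R N :=
  fun b => \sum_(b' : bstate N) M b b' * v b'.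

(* diam X = 1 + max_{i,j in X} |i - j| (sites 'I_N are 0-based; translation invariant);
   convention diam set0 = 0. *)
Definition diam (N : nat) (X : {set 'I_N}) : nat :=
  if X == set0 then 0%N
  else (1 + \max_(i in X) \max_(j in X) (i - j))%N.

Definition agree_out (N : nat) (X : {set 'I_N}) (b b' : bstate N) : bool :=
  [forall i, (i \notin X) ==> (b i == b' i)].

Definition restr (N : nat) (X : {set 'I_N}) (b : bstate N) : bstate N :=
  [ffun i => (i \in X) && b i].

(* M is supported in X, i.e. M = A_X (x) Id_{outside X}:
   <b|M|b'> = [b, b' agree outside X] * <b_X|A|b'_X>. *)
Definition supported (R : realType) (N : nat) (X : {set 'I_N}) (M : op R N) : Prop :=
  forall b b', M b b' = if agree_out X b b' then M (restr X b) (restr X b') else 0.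

Definition weight (N : nat) (b : bstate N) : nat := #|[set i | b i]|.

Definition Wp (R : realType) (N p : nat) : vec R N :=
  fun b => if weight b == p then ((Num.sqrt ('C(N, p)%:R : R))^-1)%:C else 0.

Arguments Wp R N p : clear implicits.

Definition Wst (R : realType) (N : nat) : vec R N := Wp R N 1.

Arguments Wst R N : clear implicits.

Definition zbar (R : realType) (N : nat) : vec R N :=
  fun b => if [forall i, ~~ b i] then 1 else 0.
Arguments zbar R N : clear implicits.

From HB Require Import structures.
From mathcomp Require Import all_boot all_order all_algebra.
From mathcomp Require Import complex.
From mathcomp Require Import boolp reals.
Set Implicit Arguments. Unset Strict Implicit. Unset Printing Implicit Defensive.
Import Order.TTheory GRing.Theory Num.Theory.
Local Open Scope ring_scope.

(* Put the p excitations of a basis state |b> at sites 0, Rmax, 2 Rmax, ...,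
   so that every X of diameter at most Rmax meets b in at most one site.  A
   Hamiltonian term h_X supported in X only sees the part of b inside X, hence
   <b|h_X|W^p> is proportional to <b restricted to X|h_X|W^k> with k = 0 or 1,
   which vanishes.  Thus <b|H|W^p> = 0 while E'_p <b|W^p> = E'_p / sqrt(C(N,p)). *)

Definition Wcoef (R : realType) (N n : nat) : R[i] :=
  ((Num.sqrt ('C(N, n)%:R : R))^-1)%:C%C.
Arguments Wcoef R N n : clear implicits.

Definition dicke (R : realType) (N n : nat) : vec R N :=
  fun b => (weight b == n)%:R.
Arguments dicke R N n : clear implicits.

Lemma Wcoef_neq0 (R : realType) (N n : nat) : (n <= N)%N -> Wcoef R N n != 0.
Proof.
move=> nN; apply/eqP => /(@complexI R); apply/eqP.
by rewrite invr_eq0 sqrtr_eq0 -ltNge ltr0n bin_gt0.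
Qed.

Lemma WpE (R : realType) (N n : nat) (b : bstate N) :
  Wp R N n b = Wcoef R N n * dicke R N n b.
Proof. by rewrite /Wp /dicke; case: eqP; rewrite ?mulr0 ?mulr1. Qed.

Lemma apply_Wp (R : realType) (N n : nat) (M : op R N) (b : bstate N) :
  apply M (Wp R N n) b = Wcoef R N n * apply M (dicke R N n) b.
Proof.
by rewrite /apply mulr_sumr; apply: eq_bigr => s _; rewrite WpE mulrCA.
Qed.

Lemma apply_Wp_eq0 (R : realType) (N n : nat) (M : op R N) :
  (n <= N)%N -> apply M (Wp R N n) = (fun _ => 0) -> apply M (dicke R N n) = (fun _ => 0).
Proof.
move=> nN MW; apply: funext => b; have /eqP := congr1 (fun v => v b) MW.
by rewrite apply_Wp mulf_eq0 (negbTE (@Wcoef_neq0 R N n nN)) => /eqP.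
Qed.

Lemma weight_eq0 (N : nat) (b : bstate N) : (weight b == 0%N) = [forall i, ~~ b i].
Proof.
rewrite /weight cards_eq0; apply/eqP/forallP => [b0 i|bF].
  by apply/negP => bi; have := in_set0 i; rewrite -b0 inE bi.
by apply/setP => i; rewrite !inE (negbTE (bF i)).
Qed.

Lemma zbar_Wp0 (R : realType) (N : nat) : zbar R N = Wp R N 0.
Proof.
apply: funext => b; rewrite /zbar /Wp -weight_eq0 bin0 sqrtr1 invr1.
by case: eqP.
Qed.

Section FlipOutside.

Variables (N : nat) (X : {set 'I_N}) (b : bstate N).

(* Maps the states agreeing with restr X b outside X onto those agreeing with b. *)
Definition flip_out (s : bstate N) : bstate N :=
  [ffun i => if i \in X then s i else s i (+) b i].

Lemma flip_outK : involutive flip_out.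
Proof. by move=> s; apply/ffunP => i; rewrite !ffunE; case: (i \in X); rewrite ?addbK. Qed.

Lemma restr_flip_out (s : bstate N) : restr X (flip_out s) = restr X s.
Proof. by apply/ffunP => i; rewrite !ffunE; case: (i \in X). Qed.

Lemma restr_id (s : bstate N) : restr X (restr X s) = restr X s.
Proof. by apply/ffunP => i; rewrite !ffunE; case: (i \in X). Qed.

Lemma agree_out_flip_out (s : bstate N) :
  agree_out X b (flip_out s) = agree_out X (restr X b) s.
Proof.
apply/forallP/forallP => bs i; have := bs i; rewrite /restr !ffunE;
  by case: (i \in X) => //=; case: (b i); case: (s i).
Qed.

Lemma weight_flip_out (s : bstate N) : agree_out X (restr X b) s ->
  weight (flip_out s) = (weight s + #|[set i | b i] :\: X|)%N.
Proof.
move=> /forallP sX; rewrite /weight -(cardsID X [set i | flip_out s i]).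
congr (_ + _)%N; apply: eq_card => i; rewrite !inE ffunE;
  case iX: (i \in X); rewrite ?andbT ?andbF //=;
  by have := sX i; rewrite /restr ffunE iX => /eqP <-.
Qed.

Lemma weight_split : weight b = (#|[set i | b i] :&: X| + #|[set i | b i] :\: X|)%N.
Proof. by rewrite /weight cardsID. Qed.

End FlipOutside.

Lemma apply_dicke_supported (R : realType) (N : nat) (X : {set 'I_N}) (M : op R N)
    (b : bstate N) :
  supported X M ->
  apply M (dicke R N (weight b)) b
    = apply M (dicke R N #|[set i | b i] :&: X|) (restr X b).
Proof.
move=> supM; rewrite /apply (reindex_inj (inv_inj (flip_outK X b))) /=.
apply: eq_bigr => s _.
have -> : M b (flip_out X b s) = M (restr X b) s.
  by rewrite supM [RHS]supM agree_out_flip_out restr_flip_out restr_id.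
case ag: (agree_out X (restr X b) s); last by rewrite supM ag !mul0r.
by rewrite /dicke weight_flip_out // (weight_split X b) eqn_add2r.
Qed.

Lemma leq_dist_diam (N : nat) (X : {set 'I_N}) (a c : 'I_N) :
  a \in X -> c \in X -> (c - a < diam X)%N.
Proof.
move=> aX cX; rewrite /diam; have /negbTE -> : X != set0 by apply/set0Pn; exists a.
rewrite add1n ltnS; apply: leq_trans (leq_bigmax_cond _ cX).
exact: leq_bigmax_cond _ aX.
Qed.

(* The comb {0, d, 2d, ..., (p-1)d}. *)
Lemma exists_sparse_set (N d p : nat) : (0 < d)%N -> (p * d <= N)%N ->
  exists S : {set 'I_N}, #|S| = p /\
    forall X : {set 'I_N}, (diam X <= d)%N -> (#|S :&: X| <= 1)%N.
Proof.
move=> d0 pdN; have combP (j : 'I_p) : (j * d < N)%N.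
  by apply: leq_trans pdN; rewrite ltn_pmul2r.
pose comb (j : 'I_p) : 'I_N := Ordinal (combP j).
have comb_inj : injective comb.
  by move=> j1 j2 /(congr1 val) /eqP; rewrite /= eqn_pmul2r // => /eqP /val_inj.
exists (comb @: setT); split; first by rewrite card_imset // cardsT card_ord.
move=> X dX; apply/card_le1_eqP => x y; rewrite !inE.
move=> /andP[/imsetP[j1 _ ->] X1] /andP[/imsetP[j2 _ ->] X2]; congr comb.
have sep (k1 k2 : 'I_p) : comb k1 \in X -> comb k2 \in X -> (k2 <= k1)%N.
  move=> Xk1 Xk2; rewrite leqNgt; apply/negP => k12.
  have := leq_trans (leq_dist_diam Xk1 Xk2) dX.
  by rewrite /= -mulnBl ltnNge leq_pmull ?subn_gt0.
by apply: val_inj; apply/eqP; rewrite eqn_leq !sep.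
Qed.

Theorem proposition2 (R : realType) (N Rmax : nat) (h : {set 'I_N} -> op R N)
  (p : nat) (E : R[i]) :
  (0 < Rmax)%N ->
  (forall X : {set 'I_N}, (diam X <= Rmax)%N ->
     [/\ supported X (h X),
         apply (h X) (Wst R N) = (fun _ => 0) &
         apply (h X) (zbar R N) = (fun _ => 0)]) ->
  (p <= N)%N -> (p * Rmax <= N)%N ->
  apply (fun b b' => \sum_(X : {set 'I_N} | (diam X <= Rmax)%N) h X b b') (Wp R N p)
    = (fun b => E * Wp R N p b) ->
  E = 0.
Proof.
move=> Rmax0 hyp pN pRN eig.
have [S [cardS sparseS]] := exists_sparse_set Rmax0 pRN.
pose b : bstate N := [ffun i => i \in S].
have suppb : [set i | b i] = S by apply/setP => i; rewrite inE ffunE.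
have wb : weight b = p by rewrite /weight suppb.
have term0 X : (diam X <= Rmax)%N -> apply (h X) (Wp R N p) b = 0.
  move=> dX; have [supX hW hz] := hyp X dX.
  rewrite apply_Wp -wb (apply_dicke_supported _ supX) suppb.
  have := sparseS X dX; have := max_card (mem (S :&: X)); rewrite card_ord.
  case: #|S :&: X| => [_ _|[N1 _|//]].
    by rewrite (apply_Wp_eq0 (leq0n N)) ?mulr0 // -zbar_Wp0.
  by rewrite (apply_Wp_eq0 N1) ?mulr0.
have := congr1 (fun v => v b) eig; rewrite /apply.
under eq_bigr do rewrite mulr_suml.
rewrite exchange_big big1 => [|X dX]; last exact: term0.
move/esym/eqP; rewrite WpE /dicke wb eqxx mulr1 mulf_eq0.
by rewrite (negbTE (@Wcoef_neq0 R N p pN)) orbF => /eqP.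
Qed.
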